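(* Let $\boldsymbol{S}$ be a $p\times p$ symmetric positive semidefinite matrix that is nonsingular, let $\rho>0$, $k$ an integer with $0\le k\le\binom p2$, $\mathcal{C}=\{\boldsymbol{A}\in\mathbb{R}^{p\times p}:\boldsymbol{A}=\boldsymbol{A}^T,\ \|\boldsymbol{A}\|_0\le 2k+p\}$, and for positive definite $\boldsymbol{\Sigma}$ let $h_\rho(\boldsymbol{\Sigma})=\ln\det\boldsymbol{\Sigma}+\mathrm{tr}(\boldsymbol{\Sigma}^{-1}\boldsymbol{S})+\frac\rho2\mathrm{dist}(\boldsymbol{\Sigma},\mathcal{C})^2$. Then $h_\rho$ is coercive on the positive definite cone: $h_\rho(\boldsymbol{\Sigma})\to\infty$ whenever $\boldsymbol{\Sigma}$ ranges over positive definite matrices with $\|\boldsymbol{\Sigma}\|\to\infty$ or $\|\boldsymbol{\Sigma}^{-1}\|\to\infty$.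
   Context: $\|\boldsymbol{A}\|_0$ is the number of nonzero entries of $\boldsymbol{A}$; $\mathrm{dist}$ is Frobenius distance to the set $\mathcal{C}$. *)

From HB Require Import structures.
From mathcomp Require Import all_boot all_order all_algebra.
From mathcomp Require Import all_classical all_reals.
From mathcomp Require Import exp.
Set Implicit Arguments. Unset Strict Implicit. Unset Printing Implicit Defensive.
Import Order.TTheory GRing.Theory Num.Theory.
Local Open Scope ring_scope.
Local Open Scope classical_set_scope.

Section Defs.
Variable R : realType.
Variable p : nat.

Definition posdef (A : 'M[R]_p) : Prop :=
  A^T = A /\ forall x : 'cV[R]_p, x != 0 -> 0 < (x^T *m A *m x) 0 0.

Definition possemidef (A : 'M[R]_p) : Prop :=
  A^T = A /\ forall x : 'cV[R]_p, 0 <= (x^T *m A *m x) 0 0.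

Definition frob (A : 'M[R]_p) : R :=
  Num.sqrt (\sum_(i < p) \sum_(j < p) A i j ^+ 2).

Definition nnz (A : 'M[R]_p) : nat :=
  #|[set ij : 'I_p * 'I_p | A ij.1 ij.2 != 0]|.

Definition sparse_sym (k : nat) : set 'M[R]_p :=
  [set A | A^T = A /\ (nnz A <= 2 * k + p)%N].

Definition dist (C : set 'M[R]_p) (X : 'M[R]_p) : R :=
  inf [set frob (X - A) | A in C].

Definition h_rho (S : 'M[R]_p) (rho : R) (k : nat) (Sig : 'M[R]_p) : R :=
  ln (\det Sig) + \tr (invmx Sig *m S)
  + rho / 2 * (dist (sparse_sym k) Sig) ^+ 2.

End Defs.

From HB Require Import structures.
From mathcomp Require Import all_boot all_order all_algebra.
From mathcomp Require Import all_classical all_reals.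
From mathcomp Require Import sequences exp.
From mathcomp Require Import ring lra perm.
(* Factor S = N N^T and whiten: X := N^T Sig^-1 N is positive semidefinite, with
   tr X = tr (Sig^-1 S) and det X = det S / det Sig, so that
   h_rho Sig >= ln det S - ln det X + tr X.  Every entry of X is bounded by
   tau := tr X, hence det X <= p! tau^p and the lower bound is at least
   ln det S - ln p! - p ln tau + tau, which grows with tau.  Both kinds of blow-up
   force it up: Sig^-1 = N^-T X N^-1 has norm O(tau), and by the adjugate formula
   ||Sig|| det X = ||N adj(X) N^T|| = O(tau^(p-1)), so a large ||Sig|| makes
   -ln det X large compared to ln tau. *)

Set Implicit Arguments.
Unset Strict Implicit.
Unset Printing Implicit Defensive.
Import Order.TTheory GRing.Theory Num.Theory.
Local Open Scope ring_scope.

Section EntryBounds.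
Variable R : numDomainType.

Lemma norm_det_le n (A : 'M[R]_n) c :
  (forall i j, `|A i j| <= c) -> `|\det A| <= n`!%:R * c ^+ n.
Proof.
move=> leAc; rewrite -card_Sn mulr_natl -sumr_const.
apply: le_trans (ler_norm_sum _ _ _) (ler_sum _ _) => s _.
rewrite normrM normr_sign mul1r normr_prod -[X in c ^+ X]card_ord -prodr_const.
by apply: ler_prod => i _; rewrite normr_ge0 leAc.
Qed.

Lemma norm_adj_le n (A : 'M[R]_n) c i j :
  (forall i j, `|A i j| <= c) -> `|\adj A i j| <= n.-1`!%:R * c ^+ n.-1.
Proof.
move=> leAc; rewrite mxE /cofactor normrM normr_sign mul1r.
by apply: norm_det_le => a b; rewrite !mxE.
Qed.

Lemma norm_mulmx_le m n p (A : 'M[R]_(m, n)) (B : 'M[R]_(n, p)) a b i j :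
    (forall i j, `|A i j| <= a) -> (forall i j, `|B i j| <= b) ->
  `|(A *m B) i j| <= n%:R * (a * b).
Proof.
move=> leAa leBb; rewrite mxE -[X in X%:R]card_ord mulr_natl -sumr_const.
apply: le_trans (ler_norm_sum _ _ _) (ler_sum _ _) => k _.
by rewrite normrM ler_pM.
Qed.

Lemma ex_norm_entry_bound m n (A : 'M[R]_(m, n)) :
  exists2 c, 0 < c & forall i j, `|A i j| <= c.
Proof.
exists (1 + \sum_i \sum_j `|A i j|) => [|i j].
  by rewrite ltr_pwDl // !sumr_ge0 // => i _; rewrite sumr_ge0.
rewrite ler_wpDl // (bigD1 i) //= (bigD1 j) //= -addrA lerDl.
by rewrite addr_ge0 // !sumr_ge0 // => k _; rewrite sumr_ge0.
Qed.

End EntryBounds.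

Lemma frob_le (R : realType) n (A : 'M[R]_n) c :
  0 <= c -> (forall i j, `|A i j| <= c) -> frob A <= n%:R * c.
Proof.
move=> c_ge0 leAc; have nc_ge0 : 0 <= n%:R * c by rewrite mulr_ge0.
rewrite /frob -(ger0_norm nc_ge0) -sqrtr_sqr ler_sqrt ?sqr_ge0 //.
have -> : (n%:R * c) ^+ 2 = \sum_(i < n) \sum_(j < n) c ^+ 2.
  by rewrite !sumr_const card_ord -mulrnA -[_ *+ (n * n)]mulr_natl natrM; ring.
apply: ler_sum => i _; apply: ler_sum => j _.
by rewrite -real_normK ?num_real // lerXn2r ?nnegrE.
Qed.

Section PositiveSemidefinite.
Variables (R : realType) (n : nat).
Implicit Types (P A N : 'M[R]_n) (x y z : 'cV[R]_n).

Definition mxform P x y : R := (x^T *m P *m y) 0 0.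

Lemma mxformDl P x y z : mxform P (x + y) z = mxform P x z + mxform P y z.
Proof. by rewrite /mxform linearD /= !mulmxDl mxE. Qed.

Lemma mxformDr P x y z : mxform P z (x + y) = mxform P z x + mxform P z y.
Proof. by rewrite /mxform mulmxDr mxE. Qed.

Lemma mxformZl P a x y : mxform P (a *: x) y = a * mxform P x y.
Proof. by rewrite /mxform linearZ /= -!scalemxAl mxE. Qed.

Lemma mxformZr P a x y : mxform P x (a *: y) = a * mxform P x y.
Proof. by rewrite /mxform -scalemxAr mxE. Qed.

Lemma mxformC P x y : P^T = P -> mxform P x y = mxform P y x.
Proof.
move=> symP; rewrite /mxform.
have -> : (x^T *m P *m y) 0 0 = ((x^T *m P *m y)^T) 0 0 by rewrite [RHS]mxE.
by rewrite !trmx_mul trmxK symP mulmxA.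
Qed.

Lemma mxform_delta P i j : mxform P (delta_mx i 0) (delta_mx j 0) = P i j.
Proof. by rewrite /mxform trmx_delta -rowE -colE !mxE. Qed.

Definition mxformE := (mxformDl, mxformDr, mxformZl, mxformZr, mxform_delta).

Lemma psd_sym P i j : possemidef P -> P j i = P i j.
Proof. by case=> symP _; rewrite -{1}symP mxE. Qed.

Lemma psd_diag_ge0 P i : possemidef P -> 0 <= P i i.
Proof. by case=> _ /(_ (delta_mx i 0)); rewrite -/(mxform _ _ _) mxform_delta. Qed.

Lemma psd_diag_le_trace P i : possemidef P -> P i i <= \tr P.
Proof.
move=> psdP; rewrite /mxtrace (bigD1 i) //= lerDl.
by apply: sumr_ge0 => j _; exact: psd_diag_ge0.
Qed.

Lemma psd_norm_entry_le_trace P i j : possemidef P -> `|P i j| <= \tr P.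
Proof.
move=> psdP; have [_ formP] := psdP.
have form_pm (s : R) : 0 <= P i i + s * (P i j *+ 2) + s ^+ 2 * P j j.
  have := formP (delta_mx i 0 + s *: delta_mx j 0).
  rewrite -/(mxform _ _ _) !mxformE (psd_sym j i psdP); lra.
have := form_pm 1; have := form_pm (-1).
have := psd_diag_le_trace i psdP; have := psd_diag_le_trace j psdP.
rewrite ler_norml; lra.
Qed.

Lemma psd_row_eq0 P q j : possemidef P -> P q q = 0 -> P q j = 0.
Proof.
move=> psdP Pqq0; apply/eqP/negPn/negP => Pqj_neq0.
have [_ /(_ (- (P j j + 1) / (P q j *+ 2) *: delta_mx q 0 + delta_mx j 0))] := psdP.
rewrite -/(mxform _ _ _) !mxformE Pqq0 (psd_sym q j psdP).
set t := - _ / _; have -> : t * (t * 0) + t * P q j + (t * P q j + P j j) = -1.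
  by rewrite /t; field.
by move=> ?; lra.
Qed.

Lemma mxform_rank1 (c x : 'cV[R]_n) :
  (x^T *m (c *m c^T) *m x) 0 0 = (x^T *m c) 0 0 ^+ 2.
Proof.
rewrite mulmxA -mulmxA mxE big_ord1 expr2; congr (_ * _).
by rewrite -[c^T *m x]trmxK trmx_mul trmxK mxE.
Qed.

Lemma psd_sub_rank1 P q : possemidef P -> 0 < P q q ->
  possemidef (P - (P q q)^-1 *: (col q P *m (col q P)^T)).
Proof.
move=> psdP Pqq_gt0; have [symP formP] := psdP; split.
  by rewrite linearB linearZ /= trmx_mul trmxK symP.
move=> x; set a := P q q; set b := mxform P x (delta_mx q 0).
have -> : (x^T *m (P - a^-1 *: (col q P *m (col q P)^T)) *m x) 0 0
          = mxform P x x - a^-1 * b ^+ 2.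
  rewrite mulmxBr mulmxBl -scalemxAr -scalemxAl mxE [X in _ + X]mxE [X in - X]mxE.
  by rewrite mxform_rank1 /b /mxform colE mulmxA.
have := formP (x - (b / a) *: delta_mx q 0).
rewrite -/(mxform _ _ _) -scaleN1r !mxformE -/a (mxformC (delta_mx q 0) x symP) -/b.
suff -> : mxform P x x + -1 * (b / a * b) + (-1 * (b / a * b)
    + -1 * (b / a * (-1 * (b / a * a)))) = mxform P x x - a^-1 * b ^+ 2 by [].
by field; rewrite gt_eqF.
Qed.

Lemma psd_factor_trunc m P : possemidef P ->
    (forall i j : 'I_n, (m <= i)%N -> P i j = 0) ->
  exists2 M : 'M[R]_n, P = M *m M^T & forall i k : 'I_n, (m <= k)%N -> M i k = 0.
Proof.
elim: m P => [|m IHm] P psdP Pz.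
  exists 0 => [|i k _]; last by rewrite mxE.
  by apply/matrixP => i j; rewrite mul0mx Pz // mxE.
have weaken M : (forall i k : 'I_n, (m <= k)%N -> M i k = 0) ->
    forall i k : 'I_n, (m < k)%N -> M i k = 0.
  by move=> Mz i k /ltnW; exact: Mz.
have [le_nm|lt_mn] := leqP n m.
  have [|M PE Mz] := IHm P psdP; last by exists M; last exact: weaken.
  by move=> i j le_mi; have := ltn_ord i; rewrite ltnNge (leq_trans le_nm le_mi).
pose q := Ordinal lt_mn.
have lead_cases (i : 'I_n) : (m <= i)%N -> i = q \/ (m < i)%N.
  by rewrite leq_eqVlt => /orP[/eqP mi|]; [left; apply: val_inj|right].
have := psd_diag_ge0 q psdP; rewrite le_eqVlt => /orP[/eqP/esym Pqq0|Pqq_gt0].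
  have [|M PE Mz] := IHm P psdP; last by exists M; last exact: weaken.
  by move=> i j /lead_cases[->|/Pz//]; exact: psd_row_eq0.
set v := (Num.sqrt (P q q))^-1 *: col q P.
have vvE : v *m v^T = (P q q)^-1 *: (col q P *m (col q P)^T).
  rewrite linearZ /= -scalemxAl -scalemxAr scalerA -invrM ?unitfE ?sqrtr_eq0 -?ltNge //.
  by rewrite -expr2 sqr_sqrtr // ltW.
have [||M' PE' M'z] := IHm (P - v *m v^T).
- by rewrite vvE; exact: psd_sub_rank1.
- move=> i j /lead_cases[->|lt_mi]; rewrite vvE !mxE big_ord1 !mxE.
    by rewrite (psd_sym q j psdP) mulrA mulVf ?mul1r ?subrr // gt_eqF.
  by rewrite !(Pz i) // mul0r mulr0 subr0.
exists (M' + v *m delta_mx 0 q) => [|i k lt_mk].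
  have M'q0 : M' *m delta_mx q 0 = 0 :> 'cV_n.
    by rewrite -colE; apply/matrixP => i j; rewrite !mxE M'z.
  have eqM'T : delta_mx 0 q *m M'^T = 0 :> 'rV_n.
    by rewrite -trmx_delta -trmx_mul M'q0 trmx0.
  have eqq : (delta_mx 0 q : 'rV[R]_n) *m delta_mx q 0 = 1%:M.
    by rewrite mul_delta_mx; apply/matrixP => i j; rewrite !ord1 !mxE.
  rewrite linearD /= trmx_mul trmx_delta mulmxDl !mulmxDr -PE' !mulmxA M'q0.
  rewrite mul0mx addr0 -(mulmxA v _ M'^T) eqM'T mulmx0 add0r.
  by rewrite -(mulmxA v) eqq mulmx1 subrK.
have kq : k != q by apply: contraTneq lt_mk => ->; rewrite ltnn.
by rewrite !mxE M'z ?(ltnW lt_mk) // big_ord1 !mxE (negbTE kq) andbF mulr0 add0r.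
Qed.

Lemma psd_factor P : possemidef P -> exists M : 'M[R]_n, P = M *m M^T.
Proof.
move=> psdP; have [|M PE _] := @psd_factor_trunc n P psdP; last by exists M.
by move=> i j; rewrite leqNgt ltn_ord.
Qed.

Lemma psd_det_gt0 P : possemidef P -> P \in unitmx -> 0 < \det P.
Proof.
move=> psdP unitP; have [M PE] := psd_factor psdP.
have : \det P != 0 by rewrite -unitfE -unitmxE.
by rewrite PE det_mulmx det_tr lt_def => ->; rewrite -expr2 sqr_ge0.
Qed.

Lemma psd_congr P N : possemidef P -> possemidef (N^T *m P *m N).
Proof.
case=> symP formP; split; first by rewrite !trmx_mul trmxK symP mulmxA.
by move=> x; have := formP (N *m x); rewrite trmx_mul !mulmxA.
Qed.

Lemma posdef_psd A : posdef A -> possemidef A.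
Proof.
case=> symA formA; split=> // x; have [->|/formA/ltW//] := eqVneq x 0.
by rewrite trmx0 !mul0mx mxE.
Qed.

Lemma posdef_unitmx A : posdef A -> A \in unitmx.
Proof.
case=> _ formA; rewrite -row_free_unit -kermx_eq0; apply/negP => /negP.
case/rowV0Pn => u /sub_kermxP uA0 u_neq0.
by have := formA u^T; rewrite trmx_eq0 trmxK uA0 mul0mx mxE ltxx => /(_ u_neq0).
Qed.

Lemma posdef_inv_psd A : posdef A -> possemidef (invmx A).
Proof.
move=> pdA; have [symA _] := pdA.
have := psd_congr (invmx A) (posdef_psd pdA).
by rewrite trmx_inv symA mulVmx ?mul1mx // posdef_unitmx.
Qed.

Lemma psd_det_le_trace P : possemidef P -> \det P <= n`!%:R * \tr P ^+ n.
Proof.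
move=> psdP; apply: le_trans (ler_norm _) _.
by apply: norm_det_le => i j; exact: psd_norm_entry_le_trace.
Qed.

Lemma psd_trace_gt0 P : (0 < n)%N -> possemidef P -> P \in unitmx -> 0 < \tr P.
Proof.
move=> n_gt0 psdP unitP; pose i0 := Ordinal n_gt0.
have tr_ge0 := le_trans (psd_diag_ge0 i0 psdP) (psd_diag_le_trace i0 psdP).
rewrite lt_def tr_ge0 andbT; apply/eqP => tr0.
have := psd_det_le_trace psdP; rewrite tr0 expr0n gtn_eqF // mulr0.
by rewrite leNgt psd_det_gt0.
Qed.

End PositiveSemidefinite.

Lemma natmul_ln_le_half (R : realType) (k : nat) :
  exists C : R, forall t, 0 < t -> k%:R * ln t <= t / 2 + C.
Proof.
case: k => [|k]; first by exists 0 => t t_gt0; rewrite mul0r addr0 divr_ge0 ?ltW.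
pose K : R := 2 * k.+1%:R; have K_gt0 : 0 < K by rewrite mulr_gt0.
exists (k.+1%:R * ln K) => t t_gt0.
have -> : ln t = ln (t / K) + ln K by rewrite -lnM ?posrE ?divr_gt0 // divfK ?gt_eqF.
have /ltW := ln_sublinear (divr_gt0 t_gt0 K_gt0).
rewrite mulrDr lerD2r -(ler_pM2l (ltr0Sn _ k)) => /le_trans; apply.
suff -> : k.+1%:R * (t / K) = t / 2 by [].
by rewrite /K; field; rewrite gt_eqF // ltr_pwDl.
Qed.

Lemma coercive_ln_bound (R : realType) (n : nat) (a c K1 K2 : R) :
    0 < c -> 0 < K1 -> 0 < K2 ->
  forall M, exists B, forall tau delta f g : R,
    0 < tau -> 0 < delta -> delta <= c * tau ^+ n ->
    g <= K1 * tau -> f * delta <= K2 * tau ^+ n.-1 ->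
    B < f \/ B < g -> M < a - ln delta + tau.
Proof.
move=> c_gt0 K1_gt0 K2_gt0 M.
have [C1 leC1] := natmul_ln_le_half R n.
have [C2 leC2] := natmul_ln_le_half R n.-1.
(* B1 handles a large [g] by forcing [tau] up; B2 handles a large [f], which
   forces [- ln delta] up. *)
pose B1 := K1 * (2 * `|M - a + ln c + C1|).
pose B2 := expR (M - a + ln K2 + C2).
have B1_ge0 : 0 <= B1 by rewrite /B1 mulr_ge0 ?mulr_ge0 // ltW.
exists (B1 + B2) => tau delta f g tau_gt0 delta_gt0 le_delta le_g le_f [ltBf|ltBg].
- have lt_B2f : B2 < f by apply: le_lt_trans ltBf; rewrite lerDr.
  have : ln (B2 * delta) < ln (K2 * tau ^+ n.-1).
    rewrite ltr_ln ?posrE ?mulr_gt0 ?exprn_gt0 ?expR_gt0 //.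
    by apply: lt_le_trans le_f; rewrite ltr_pM2r.
  rewrite !lnM ?posrE ?exprn_gt0 ?expR_gt0 // lnXn // expRK.
  have := leC2 _ tau_gt0; rewrite mulr_natl; lra.
- have lt_tau : 2 * `|M - a + ln c + C1| < tau.
    rewrite -(ltr_pM2l K1_gt0); apply: lt_le_trans le_g.
    by apply: le_lt_trans ltBg; rewrite lerDl ltW ?expR_gt0.
  have : ln delta <= ln (c * tau ^+ n) by rewrite ler_ln ?posrE ?mulr_gt0 ?exprn_gt0.
  rewrite lnM ?posrE ?exprn_gt0 // lnXn //.
  have := leC1 _ tau_gt0; have := ler_norm (M - a + ln c + C1); rewrite mulr_natl; lra.
Qed.

Definition whiten {R : realType} {n} (N Sig : 'M[R]_n) := N^T *m invmx Sig *m N.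

Section Whitening.
Variables (R : realType) (p : nat) (N : 'M[R]_p).
Hypotheses (unitN : N \in unitmx) (p_gt0 : (0 < p)%N).
Implicit Type Sig : 'M[R]_p.

Lemma whiten_psd Sig : posdef Sig -> possemidef (whiten N Sig).
Proof. by move=> pdSig; exact/psd_congr/posdef_inv_psd. Qed.

Lemma whiten_unitmx Sig : posdef Sig -> whiten N Sig \in unitmx.
Proof.
by move=> pdSig; rewrite !unitmx_mul unitmx_tr unitmx_inv unitN (posdef_unitmx pdSig).
Qed.

Lemma trace_whiten Sig : \tr (invmx Sig *m (N *m N^T)) = \tr (whiten N Sig).
Proof. by rewrite mulmxA mxtrace_mulC mulmxA. Qed.

Lemma det_whiten Sig : \det (whiten N Sig) = \det (N *m N^T) / \det Sig.
Proof. rewrite !det_mulmx det_tr det_inv; ring. Qed.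

Lemma h_rho_ge_whiten rho k Sig : 0 <= rho -> posdef Sig ->
  ln (\det (N *m N^T)) - ln (\det (whiten N Sig)) + \tr (whiten N Sig)
    <= h_rho (N *m N^T) rho k Sig.
Proof.
move=> rho_ge0 pdSig.
have detS_gt0 : 0 < \det (N *m N^T).
  by rewrite det_mulmx det_tr -expr2 exprn_even_gt0 //= -unitfE -unitmxE.
have detSig_gt0 : 0 < \det Sig := psd_det_gt0 (posdef_psd pdSig) (posdef_unitmx pdSig).
rewrite /h_rho trace_whiten det_whiten ln_div ?posrE // opprB addrCA subrr addr0.
by rewrite lerDl mulr_ge0 ?sqr_ge0 ?divr_ge0.
Qed.

Lemma frob_invmx_le_whiten :
  exists2 K, 0 < K & forall Sig, posdef Sig -> frob (invmx Sig) <= K * \tr (whiten N Sig).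
Proof.
have [c c_gt0 le_c] := ex_norm_entry_bound (invmx N).
exists (p%:R ^+ 3 * c ^+ 2) => [|Sig pdSig]; first by rewrite mulr_gt0 ?exprn_gt0 ?ltr0n.
set X := whiten N Sig; set tau := \tr X.
have tau_ge0 : 0 <= tau := ltW (psd_trace_gt0 p_gt0 (whiten_psd pdSig) (whiten_unitmx pdSig)).
have -> : invmx Sig = (invmx N)^T *m X *m invmx N.
  by rewrite /X /whiten trmx_inv !mulmxA mulVmx ?unitmx_tr // mul1mx mulmxK.
have le_entry i j : `|((invmx N)^T *m X *m invmx N) i j| <= p%:R * (p%:R * (c * tau) * c).
  apply: norm_mulmx_le; last exact: le_c.
  move=> {}i {}j; apply: norm_mulmx_le => [{}i {}j|]; first by rewrite mxE le_c.
  by move=> {}i {}j; apply: psd_norm_entry_le_trace; exact: whiten_psd.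
have -> : p%:R ^+ 3 * c ^+ 2 * tau = p%:R * (p%:R * (p%:R * (c * tau) * c)) by ring.
by apply: frob_le le_entry; rewrite !mulr_ge0 // ltW.
Qed.

Lemma adj_whiten Sig : posdef Sig ->
  N *m \adj (whiten N Sig) *m N^T = \det (whiten N Sig) *: Sig.
Proof.
move=> pdSig; set X := whiten N Sig; have unitX := whiten_unitmx pdSig.
have unitNT : N^T \in unitmx by rewrite unitmx_tr.
have invXE : invmx X = invmx N *m Sig *m invmx N^T.
  rewrite -[RHS](mulKmx unitX) [X *m _]mulmxA /X /whiten !mulmxA.
  by rewrite mulmxK // mulmxKV ?posdef_unitmx // mulmxK.
have adjXE : \adj X = \det X *: invmx X.
  by rewrite /invmx unitX scalerA mulfV ?scale1r // -unitfE -unitmxE.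
by rewrite adjXE invXE -scalemxAr -scalemxAl !mulmxA mulmxV // mul1mx mulmxKV.
Qed.

Lemma frob_mul_det_whiten_le : exists2 K, 0 < K & forall Sig, posdef Sig ->
  frob Sig * \det (whiten N Sig) <= K * \tr (whiten N Sig) ^+ p.-1.
Proof.
have [d d_gt0 le_d] := ex_norm_entry_bound N.
exists (p%:R ^+ 3 * d ^+ 2 * p.-1`!%:R) => [|Sig pdSig].
  by rewrite !mulr_gt0 ?exprn_gt0 ?ltr0n ?fact_gt0.
set X := whiten N Sig; set tau := \tr X; set delta := \det X.
have psdX := whiten_psd pdSig; have unitX := whiten_unitmx pdSig.
have delta_gt0 : 0 < delta := psd_det_gt0 psdX unitX.
have tau_ge0 : 0 <= tau := ltW (psd_trace_gt0 p_gt0 psdX unitX).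
pose beta := p.-1`!%:R * tau ^+ p.-1.
have le_entry i j : `|Sig i j| <= delta^-1 * (p%:R * (p%:R * (d * beta) * d)).
  have -> : Sig i j = delta^-1 * (delta *: Sig) i j by rewrite mxE mulKf ?lt0r_neq0.
  rewrite -adj_whiten // normrM gtr0_norm ?invr_gt0 // ler_pM2l ?invr_gt0 //.
  apply: norm_mulmx_le => {}i {}j; last by rewrite mxE le_d.
  apply: norm_mulmx_le => // {}i {}j; apply: norm_adj_le => {}i {}j.
  exact: psd_norm_entry_le_trace.
have -> : p%:R ^+ 3 * d ^+ 2 * p.-1`!%:R * tau ^+ p.-1
          = p%:R * (delta^-1 * (p%:R * (p%:R * (d * beta) * d))) * delta.
  by rewrite /beta; field; exact: lt0r_neq0.
rewrite ler_pM2r // (frob_le _ le_entry) //.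
apply: mulr_ge0; first by rewrite invr_ge0 ltW.
by rewrite !mulr_ge0 ?exprn_ge0 // ltW.
Qed.

End Whitening.

Theorem lemma1 (R : realType) (p : nat) (S : 'M[R]_p) (rho : R) (k : nat) :
  possemidef S -> S \in unitmx -> 0 < rho -> (k <= 'C(p, 2))%N ->
  forall M : R, exists B : R, forall Sig : 'M[R]_p,
    posdef Sig -> (B < frob Sig \/ B < frob (invmx Sig)) ->
    M < h_rho S rho k Sig.
Proof.
move=> psdS unitS rho_gt0 _ M.
have [p0|p_gt0] := posnP p.
  by exists 0 => Sig _; subst p; rewrite /frob !big_ord0 sqrtr0 ltxx; case.
have [N SE] := psd_factor psdS; subst S.
have unitN : N \in unitmx by move: unitS; rewrite unitmx_mul => /andP[].
have [K1 K1_gt0 leK1] := frob_invmx_le_whiten unitN p_gt0.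
have [K2 K2_gt0 leK2] := frob_mul_det_whiten_le unitN p_gt0.
have fact_gt0 : 0 < p`!%:R :> R by rewrite ltr0n fact_gt0.
have [B leB] := coercive_ln_bound p (ln (\det (N *m N^T))) fact_gt0 K1_gt0 K2_gt0 M.
exists B => Sig pdSig ltB; apply: lt_le_trans (h_rho_ge_whiten unitN k (ltW rho_gt0) pdSig).
have psdX := whiten_psd N pdSig; have unitX := whiten_unitmx unitN pdSig.
apply: leB ltB; [exact: psd_trace_gt0 | exact: psd_det_gt0 | exact: psd_det_le_trace
  | exact: leK1 | exact: leK2].
Qed.
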